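(* Let $G$ be a connected graph on $n\ge 4$ vertices with longest path of length $p$. Let $L_1,L_2,L_3$ be three paths of $G$, each having the vertex $u$ as an endpoint, such that any two of them intersect only in $u$. Suppose $\ell(L_1)=\lceil p/2\rceil$, $\ell(L_2)=p-\lceil p/2\rceil$ and $\ell(L_3)\ge\lceil p/2\rceil-1$. Then $u$ is a cut-vertex of $G$.
   Context: All graphs are finite, simple and undirected. $\ell(P)$ denotes the length (number of edges) of a path $P$. A cut-vertex is a vertex whose removal increases the number of components. *)

From mathcomp Require Import all_boot.
Set Implicit Arguments. Unset Strict Implicit. Unset Printing Implicit Defensive.

Definition simple_graph (T : finType) (e : rel T) : Prop :=
  symmetric e /\ irreflexive e.

Definition gpath (T : finType) (e : rel T) (s : seq T) : bool :=
  match s with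
  | [::] => false
  | x :: s' => path e x s' && uniq s
  end.

(* length = number of edges *)
Definition plen (T : eqType) (s : seq T) : nat := (size s).-1.

Definition endpoint (T : eqType) (u : T) (s : seq T) : bool :=
  (head u s == u) || (last u s == u).

Definition connected_graph (T : finType) (e : rel T) : Prop :=
  forall x y : T, connect e x y.

Definition longest_path_length (T : finType) (e : rel T) (p : nat) : Prop :=
  (exists s, gpath e s /\ plen s = p) /\
  (forall s, gpath e s -> plen s <= p).

(* G - u : remove vertex u (edges at u are deleted; u itself is excluded
   from the counted vertex set). *)
Definition del_vertex (T : finType) (e : rel T) (u : T) : rel T :=
  fun x y => [&& e x y, x != u & y != u].

Definition cut_vertex (T : finType) (e : rel T) (u : T) : Prop :=
  n_comp e predT < n_comp (del_vertex e u) (predC1 u).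

From mathcomp Require Import all_boot zify.
Set Implicit Arguments. Unset Strict Implicit. Unset Printing Implicit Defensive.

(* Suppose G - u is connected. Then G - u contains a path Q that meets the
   arms L1 - u, L2 - u, L3 - u only in its two ends, one end b on L1 or L2 and
   the other end a on L3; say b lies on L1 (the other case is alike, as
   l(L1) >= l(L2)).  Two paths of G are obtained by walking L2 back to u and
   then either along L1 to b, over Q to a and along L3 to its end, or along
   L3 to a, back over Q to b and along L1 to its end.  Their lengths add up to
   2 l(L2) + l(L1) + l(L3) + 2 l(Q) >= 2p + 1, so one of them is longer than
   p.  If L3 is trivial then p <= 2 and, as n >= 4, there is a vertex c off L1
   and L2; a path of G - u from L1 to c gives a path of length at least
   l(L2) + 2 > p in the same way. *)

Lemma uniq_count_leq (T : eqType) (s t : seq T) :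
  uniq t -> (forall x, count_mem x s <= count_mem x t) -> uniq s.
Proof.
move=> Ut le_st; apply: count_mem_uniq => x.
have := le_st x; rewrite (count_uniq_mem _ Ut).
case: (boolP (x \in s)) => [xs | /count_memPn -> //].
have : 0 < count_mem x s by rewrite -has_count has_pred1.
by case: (x \in t) => /=; lia.
Qed.

(* Clearing the context keeps lia from case-splitting on boolean hypotheses. *)
Ltac uniq_by_count U :=
  apply: (uniq_count_leq U); let z := fresh "z" in intro z; clear - z; rewrite /=;
  do ![rewrite count_cat /= | rewrite count_rev /=]; lia.

Lemma uniq_cons_cat (T : eqType) (u : T) s t :
  uniq (u :: s) -> uniq (u :: t) ->
  (forall x, x \in u :: s -> x \in u :: t -> x = u) -> uniq (u :: s ++ t).
Proof.
rewrite !cons_uniq => /andP[us Us] /andP[ut Ut] st_u.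
rewrite mem_cat negb_or us ut cat_uniq Us Ut /= andbT.
apply/hasPn => x xt; apply/negP => xs.
have xu : x = u by apply: st_u; rewrite inE ?xs ?xt orbT.
by rewrite -xu xs in us.
Qed.

Lemma exists_notin (T : finType) (s : seq T) : size s < #|T| -> exists c, c \notin s.
Proof.
move=> lt_s; case: (pickP (fun c => c \notin s)) => [c cs | all_in]; first by exists c.
have : #|T| <= #|s|.
  by apply/subset_leq_card/subsetP => x _; move/negbFE: (all_in x).
by have := card_size s; lia.
Qed.

Lemma uphalf_bounds n : n <= (uphalf n).*2 <= n.+1.
Proof. by rewrite uphalfK leq_addl /=; case: odd. Qed.

Section SymmetricPaths.
Variables (T : eqType) (e : rel T).
Hypothesis esym : symmetric e.

Lemma sym_path_rcons x s y : path e x (rcons s y) = path e y (rcons (rev s) x).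
Proof.
have := rev_path e x (rcons s y).
rewrite last_rcons belast_rcons rev_cons => ->.
by apply: eq_path => a b; rewrite esym.
Qed.

Lemma sorted_join u sB w : path e u sB -> path e u w -> sorted e (rev sB ++ u :: w).
Proof.
case/lastP: sB => [|s x] //=; rewrite rev_rcons sym_path_rcons /= => Ps Pw.
by rewrite -cat_rcons cat_path last_rcons Ps.
Qed.

End SymmetricPaths.

Lemma gpathE (T : finType) (e : rel T) s :
  gpath e s = [&& s != [::], sorted e s & uniq s].
Proof. by case: s. Qed.

Section LongestPath.
Variables (T : finType) (e : rel T) (p : nat).
Hypotheses (esym : symmetric e) (longest : forall s, gpath e s -> plen s <= p).

Lemma join_size_le u sB w :
  path e u sB -> path e u w -> uniq (u :: sB ++ w) -> size sB + size w <= p.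
Proof.
move=> PB Pw U; have U' : uniq (rev sB ++ u :: w) by uniq_by_count U.
have := longest (s := rev sB ++ u :: w).
rewrite gpathE sorted_join // U' /plen size_cat size_rev /=.
by case: (rev sB) => [|? ?] /(_ isT); lia.
Qed.

Lemma detour_size_le u sA1 b sA2 sB q a t :
  path e u (sA1 ++ b :: sA2) -> path e u sB -> path e b (rcons q a) -> path e a t ->
  uniq (u :: sB ++ sA1 ++ b :: q ++ a :: t) ->
  size sB + size sA1 + size q + size t + 2 <= p.
Proof.
rewrite cat_path /= => /and3P[PA1 ub _] PB Pq Pt U.
have Pw : path e u (sA1 ++ b :: q ++ a :: t).
  by rewrite cat_path PA1 /= ub -cat_rcons cat_path Pq last_rcons.
by have := join_size_le PB Pw U; rewrite !size_cat /= size_cat /=; clear; lia.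
Qed.

Lemma bridge_arms_size_le u sA sB s3 b q a :
  path e u sA -> path e u sB -> path e u s3 -> b \in sA -> a \in s3 ->
  path e b (rcons q a) -> uniq (u :: sA ++ sB ++ s3 ++ q) ->
  size sA + 2 * size sB + size s3 + 2 * size q + 2 <= 2 * p.
Proof.
move=> PA PB P3 bA a3 Pq; move: PA P3.
case/splitPr: bA => sA1 sA2 PA; case/splitPr: a3 => s31 s32 P3 U.
have P3a : path e a s32 by move: P3; rewrite cat_path /= => /and3P[].
have PAb : path e b sA2 by move: PA; rewrite cat_path /= => /and3P[].
have Pqr : path e a (rcons (rev q) b) by rewrite -sym_path_rcons.
have U1 : uniq (u :: sB ++ sA1 ++ b :: q ++ a :: s32) by uniq_by_count U.
have U2 : uniq (u :: sB ++ s31 ++ a :: rev q ++ b :: sA2) by uniq_by_count U.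
have := detour_size_le PA PB Pq P3a U1; have := detour_size_le P3 PB Pqr PAb U2.
by rewrite size_rev !size_cat /=; clear; lia.
Qed.

Lemma bridge_vertex_size_le u sA sB b q c :
  path e u sA -> path e u sB -> b \in sA -> path e b (rcons q c) ->
  uniq (u :: sA ++ sB ++ c :: q) -> size sB + size q + 2 <= p.
Proof.
move=> + PB bA Pq; case/splitPr: bA => sA1 sA2 PA U.
have U' : uniq (u :: sB ++ sA1 ++ b :: q ++ [:: c]) by uniq_by_count U.
by have := detour_size_le PA PB Pq (isT : path e c [::]) U'; rewrite /=; lia.
Qed.

End LongestPath.

Section Bridge.
Variables (T : eqType) (r : rel T) (A B : pred T).

Lemma path_bridge q0 s a :
  A a -> ~~ B a -> all (predC (predU A B)) q0 -> uniq (q0 ++ s) ->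
  path r a (q0 ++ s) -> B (last a (q0 ++ s)) ->
  exists a' q b,
    [/\ A a', B b, path r a' (rcons q b), uniq q & all (predC (predU A B)) q].
Proof.
(* [a :: q0] is the part of the walk after its last visit to A. *)
elim: s a q0 => [|y s IHs] a q0 Aa nBa out_q0 U P.
  rewrite cats0; have := mem_last a q0; rewrite inE => /predU1P[-> | /(allP out_q0)].
    by rewrite (negbTE nBa).
  by rewrite /= negb_or => /andP[_ /negbTE->].
rewrite last_cat /=; move: P; rewrite cat_path /= => /and3P[Pq0 ey Ps] Bl.
case By: (B y).
  exists a, q0, y; split=> //; first by rewrite rcons_path Pq0.
  by move: U; rewrite cat_uniq => /andP[].
case Ay: (A y).
  apply: (IHs y [::]) => //; first by rewrite By.
  by move: U; rewrite cat_uniq => /and3P[_ _ /andP[]].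
apply: (IHs a (rcons q0 y)); rewrite ?cat_rcons ?last_cat ?last_rcons //.
- by rewrite all_rcons /= Ay By.
- by rewrite cat_path Pq0 /= ey.
Qed.

End Bridge.

Lemma connect_bridge (T : finType) (r : rel T) (A B : pred T) x y :
  A x -> ~~ B x -> B y -> connect r x y ->
  exists a q b,
    [/\ A a, B b, path r a (rcons q b), uniq q & all (predC (predU A B)) q].
Proof.
move=> Ax nBx + /connectP[s Ps yE]; rewrite yE.
case: (shortenP Ps) => s' Ps' /andP[_ Us'] _ Bl.
exact: (path_bridge (q0 := [::]) Ax nBx _ Us' Ps' Bl).
Qed.

Section DeleteVertex.
Variables (T : finType) (e : rel T) (u : T).
Hypothesis esym : symmetric e.

Lemma path_del_vertex x s : path (del_vertex e u) x s -> path e x s /\ u \notin s.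
Proof.
elim: s x => //= y s IHs x /andP[/and3P[exy _ yu] /IHs[Ps us]].
by rewrite exy Ps in_cons negb_or eq_sym yu.
Qed.

Lemma connect_del_vertex_to x : connect (del_vertex e u) x u -> x = u.
Proof.
case/connectP=> s; case/lastP: s => [_ -> //|s y].
rewrite rcons_path last_rcons /del_vertex => /and4P[_ _ _ yu] uy.
by rewrite uy eqxx in yu.
Qed.

Lemma connected_n_comp_le1 : connected_graph e -> n_comp e predT <= 1.
Proof.
move=> conn; apply/card_le1_eqP => x y /andP[/eqP rx _] /andP[/eqP ry _].
by rewrite -rx -ry; apply/(rootP (sym_connect_sym esym)).
Qed.

Lemma noncut_connect_del_vertex :
  connected_graph e -> ~ cut_vertex e u ->
  {in predC1 u &, forall x y, connect (del_vertex e u) x y}.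
Proof.
move=> conn /negP; rewrite /cut_vertex -leqNgt => le_comp.
have dsym : connect_sym (del_vertex e u).
  by apply: sym_connect_sym => x y; rewrite /del_vertex esym [(x != u) && _]andbC.
have root_in z : z != u ->
    root (del_vertex e u) z \in predI (roots (del_vertex e u)) (predC1 u).
  move=> zu; rewrite inE /= roots_root //=; apply: contraNneq zu => rz.
  by apply/eqP/connect_del_vertex_to; rewrite -[X in connect _ _ X]rz connect_root.
have le1 : n_comp (del_vertex e u) (predC1 u) <= 1.
  exact: leq_trans le_comp (connected_n_comp_le1 conn).
move=> x y xu yu; apply/(rootP dsym).
by apply: (card_le1_eqP le1); apply: root_in.
Qed.

End DeleteVertex.

Section NonCutVertex.
Variables (T : finType) (e : rel T) (p : nat) (u : T).
Hypotheses (esym : symmetric e) (longest : forall s, gpath e s -> plen s <= p).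
Hypothesis conn_del : {in predC1 u &, forall x y, connect (del_vertex e u) x y}.

Lemma noncut_arms_bridge sA sB s3 y x :
  y \in sA ++ sB -> x \in s3 -> uniq (u :: sA ++ sB ++ s3) ->
  exists b q a, [/\ b \in sA ++ sB, a \in s3, path e b (rcons q a)
                  & uniq (u :: sA ++ sB ++ s3 ++ q)].
Proof.
move=> yAB x3 U; move: (U); rewrite cons_uniq catA mem_cat cat_uniq negb_or.
case/and4P=> /andP[uAB u3] _ /hasPn disj _.
have yu : y != u by apply: contraNneq uAB => <-.
have xu : x != u by apply: contraNneq u3 => <-.
have y3 : y \notin s3 by apply: contraL yAB; apply: disj.
have [b [q [a [bAB a3 Pq Uq out_q]]]] :=
  connect_bridge (A := mem (sA ++ sB)) (B := mem s3) yAB y3 x3 (conn_del yu xu).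
have [Pq' uaq] := path_del_vertex Pq.
exists b, q, a; split => //.
have -> : u :: sA ++ sB ++ s3 ++ q = (u :: sA ++ sB ++ s3) ++ q by rewrite /= !catA.
rewrite cat_uniq U Uq andbT; apply/hasPn => z zq.
have zu : z != u by apply: contraNneq uaq => <-; rewrite mem_rcons inE zq orbT.
by rewrite in_cons (negbTE zu) catA mem_cat; apply: (allP out_q).
Qed.

Lemma noncut_third_arm_size_le sA sB s3 y x :
  path e u sA -> path e u sB -> path e u s3 -> uniq (u :: sA ++ sB ++ s3) ->
  y \in sA ++ sB -> x \in s3 ->
  size sA + size sB + minn (size sA) (size sB) + size s3 + 2 <= 2 * p.
Proof.
move=> PA PB P3 U yAB x3.
have [b [q [a [+ a3 Pq Uq]]]] := noncut_arms_bridge yAB x3 U.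
rewrite mem_cat => /orP[bA|bB].
  by have := bridge_arms_size_le esym longest PA PB P3 bA a3 Pq Uq; clear; lia.
have UqBA : uniq (u :: sB ++ sA ++ s3 ++ q) by uniq_by_count Uq.
by have := bridge_arms_size_le esym longest PB PA P3 bB a3 Pq UqBA; clear; lia.
Qed.

Lemma noncut_extra_vertex_size_le sA sB c y :
  path e u sA -> path e u sB -> uniq (u :: sA ++ sB) -> c \notin u :: sA ++ sB ->
  y \in sA ++ sB -> minn (size sA) (size sB) + 2 <= p.
Proof.
move=> PA PB U cAB yAB.
have Uc : uniq (u :: sA ++ sB ++ [:: c]) by rewrite catA -cat_cons cats1 rcons_uniq cAB.
have [b [q [a [+ a3 Pq Uq]]]] := noncut_arms_bridge yAB (mem_head c [::]) Uc.
move: a3 Pq Uq; rewrite mem_seq1 => /eqP-> Pq Uq; rewrite mem_cat => /orP[bA|bB].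
  by have := bridge_vertex_size_le esym longest PA PB bA Pq Uq; clear; lia.
have UqBA : uniq (u :: sB ++ sA ++ c :: q) by uniq_by_count Uq.
by have := bridge_vertex_size_le esym longest PB PA bB Pq UqBA; clear; lia.
Qed.

End NonCutVertex.

Lemma gpath_endpoint_rooted (T : finType) (e : rel T) u L :
  symmetric e -> gpath e L -> endpoint u L ->
  exists2 s, [/\ path e u s, uniq (u :: s) & size s = plen L] & L =i u :: s.
Proof.
move=> esym; case: L => [|x s] //= /andP[Ps Us].
rewrite /endpoint /plen /= => /orP[/eqP<- | ].
  by exists s.
case/lastP: s Ps Us => [_ _ /eqP<-|s y]; first by exists [::].
rewrite last_rcons => + + /eqP yu; rewrite {y}yu => Ps Us.
exists (rcons (rev s) x); last by move=> z; rewrite !(inE, mem_rcons, mem_rev) orbCA.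
split; first by rewrite -sym_path_rcons.
  have : uniq (rev (x :: rcons s u)) by rewrite rev_uniq.
  by rewrite rev_cons rev_rcons.
by rewrite !size_rcons size_rev.
Qed.

Lemma longest_path_length_gt0 (T : finType) (e : rel T) p :
  irreflexive e -> connected_graph e -> 1 < #|T| -> longest_path_length e p -> 0 < p.
Proof.
move=> eirr conn /card_gt1P[x [y [_ _ xy]]] [_ longest].
have /connectP[[|z w] /= Pw yE] := conn x y; first by rewrite yE eqxx in xy.
case/andP: Pw => exz _; apply: (longest [:: x; z]).
rewrite /= exz mem_seq1 /= andbT; apply/eqP => xz.
by rewrite xz eirr in exz.
Qed.

Theorem lemma4 (T : finType) (e : rel T) (p : nat) (u : T)
    (L1 L2 L3 : seq T) :
  simple_graph e -> connected_graph e -> 4 <= #|T| ->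
  longest_path_length e p ->
  gpath e L1 -> gpath e L2 -> gpath e L3 ->
  endpoint u L1 -> endpoint u L2 -> endpoint u L3 ->
  (forall x, x \in L1 -> x \in L2 -> x = u) ->
  (forall x, x \in L1 -> x \in L3 -> x = u) ->
  (forall x, x \in L2 -> x \in L3 -> x = u) ->
  plen L1 = uphalf p ->
  plen L2 = p - uphalf p ->
  uphalf p - 1 <= plen L3 ->
  cut_vertex e u.
Proof.
move=> [esym eirr] conn n4 lp G1 G2 G3 E1 E2 E3 D12 D13 D23 l1 l2 l3.
have p_gt0 := longest_path_length_gt0 eirr conn (leq_trans (isT : 1 < 4) n4) lp.
have [_ longest] := lp.
apply: contraT => /negP nocut.
have conn_del := noncut_connect_del_vertex esym conn nocut.
have [s1 [P1 U1 S1] M1] := gpath_endpoint_rooted esym G1 E1.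
have [s2 [P2 U2 S2] M2] := gpath_endpoint_rooted esym G2 E2.
have [s3 [P3 U3 S3] M3] := gpath_endpoint_rooted esym G3 E3.
have U : uniq (u :: s1 ++ s2 ++ s3).
  have U23 : uniq (u :: s2 ++ s3).
    by apply: uniq_cons_cat U2 U3 _ => x; rewrite -M2 -M3; exact: D23.
  apply: uniq_cons_cat U1 U23 _ => x; rewrite -M1 in_cons mem_cat.
  move=> x1 /or3P[/eqP // | x2 | x3]; [apply: D12 | apply: D13] => //.
    by rewrite M2 inE x2 orbT.
  by rewrite M3 inE x3 orbT.
have [y y12] : exists y, y \in s1 ++ s2.
  have : 0 < size s1 by rewrite S1 l1 uphalf_gt0.
  by case: (s1) => // y s _; exists y; rewrite mem_head.
have hp := uphalf_bounds p.
have [s3_nil | [x x3]] : s3 = [::] \/ exists x, x \in s3.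
  by case: (s3) => [|x ?]; [left | right; exists x; exact: mem_head].
- move: U l3; rewrite -S3 s3_nil cats0 /= => U l3.
  have [c cN] : exists c, c \notin u :: s1 ++ s2.
    apply/exists_notin/(leq_trans _ n4).
    by rewrite /= size_cat S1 S2 l1 l2; move: l3 hp; clear; lia.
  have := noncut_extra_vertex_size_le esym longest conn_del P1 P2 U cN y12.
  by rewrite S1 S2 l1 l2; move: l3 hp; clear; lia.
- have := noncut_third_arm_size_le esym longest conn_del P1 P2 P3 U y12 x3.
  by rewrite S1 S2 S3 l1 l2; move: l3 hp; clear; lia.
Qed.
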